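(* For any $k$-atomic probability distributions $\Gamma,\Gamma'$ on $\mathbb R^d$, $$\sup_{\theta\in S^{d-1}}W_1(\Gamma_\theta,\Gamma'_\theta)\le W_1(\Gamma,\Gamma')\le k^2\sqrt d\,\sup_{\theta\in S^{d-1}}W_1(\Gamma_\theta,\Gamma'_\theta).$$
   Context: A $k$-atomic distribution is a probability distribution supported on at most $k$ points. For $\theta\in\mathbb R^d$, $\Gamma_\theta$ denotes the law of $\theta^\top U$ with $U\sim\Gamma$ (pushforward by $u\mapsto\theta^\top u$). $W_1(\Gamma,\Gamma')=\inf\mathbb E\|U-U'\|_2$ over couplings of $U\sim\Gamma$, $U'\sim\Gamma'$ (on $\mathbb R$ the norm is absolute value). $S^{d-1}$ is the unit sphere of $\mathbb R^d$. *)

From Stdlib Require Import Reals Lra ClassicalEpsilon.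
Open Scope R_scope.

Fixpoint sumR (n : nat) (f : nat -> R) : R :=
  match n with O => 0 | S m => sumR m f + f m end.

Definition Rsup (E : R -> Prop) : R :=
  epsilon (inhabits 0) (fun m => is_lub E m).
Definition Rinf (E : R -> Prop) : R := - Rsup (fun x => E (- x)).

(* Vectors of R^d are represented by u : nat -> R, only coordinates i < d matter. *)
Definition dot (d : nat) (u v : nat -> R) : R := sumR d (fun i => u i * v i).
Definition eucl_dist (d : nat) (u v : nat -> R) : R :=
  sqrt (sumR d (fun i => (u i - v i) ^ 2)).
Definition on_sphere (d : nat) (th : nat -> R) : Prop := dot d th th = 1.

(* A k-atomic probability distribution on T: sum_{i<k} w i * delta_{x i},
   with w i >= 0 and sum_{i<k} w i = 1. *)
Definition is_prob (k : nat) (w : nat -> R) : Prop :=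
  (forall i, (i < k)%nat -> 0 <= w i) /\ sumR k w = 1.

Definition is_coupling (k : nat) (w w' : nat -> R) (pi : nat -> nat -> R) : Prop :=
  (forall i j, (i < k)%nat -> (j < k)%nat -> 0 <= pi i j) /\
  (forall i, (i < k)%nat -> sumR k (fun j => pi i j) = w i) /\
  (forall j, (j < k)%nat -> sumR k (fun i => pi i j) = w' j).

Definition W1 {T : Type} (dist : T -> T -> R) (k : nat)
    (w : nat -> R) (x : nat -> T) (w' : nat -> R) (y : nat -> T) : R :=
  Rinf (fun c => exists pi, is_coupling k w w' pi /\
          c = sumR k (fun i => sumR k (fun j => pi i j * dist (x i) (y j)))).

(* Atoms of the pushforward Gamma_theta: theta^T x_i (same weights). *)
Definition proj (d : nat) (th : nat -> R) (x : nat -> nat -> R) : nat -> R :=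
  fun i => dot d th (x i).

Definition abs_dist (a b : R) : R := Rabs (a - b).

Definition sliced_sup (d k : nat) (w : nat -> R) (x : nat -> nat -> R)
    (w' : nat -> R) (y : nat -> nat -> R) : R :=
  Rsup (fun s => exists th, on_sphere d th /\
          s = W1 abs_dist k w (proj d th x) w' (proj d th y)).

(* The lower bound holds because projecting onto a unit direction is 1-Lipschitz
   (Cauchy-Schwarz), so every coupling becomes cheaper after projection.
   For the upper bound it suffices to find one unit direction [th] along which
   each of the k^2 differences [x i - y j] keeps at least a fraction
   1/(k^2 sqrt d) of its length: every coupling then loses at most that factor.
   To find [th], normalize the N nonzero differences to unit vectors [c m] and
   pick signs [e] maximizing the length of [X = sum_m e m c m].  Flipping one
   sign cannot increase [|X|], which forces [e m <c m, X> >= 1]; on the other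
   hand each coordinate of [X] is at most N in absolute value, so
   [|X| <= N sqrt d], and [th = X / |X|] works. *)

From Stdlib Require Import Reals Lra Lia Psatz ClassicalEpsilon FunctionalExtensionality.
Open Scope R_scope.

Lemma sumR_S n f : sumR (S n) f = sumR n f + f n.
Proof. reflexivity. Qed.

Lemma sumR_ext n f g :
  (forall i, (i < n)%nat -> f i = g i) -> sumR n f = sumR n g.
Proof.
  induction n as [|n IH]; intros H; simpl; auto.
  rewrite IH, H; [reflexivity | lia | intros; apply H; lia].
Qed.

Lemma sumR_le n f g :
  (forall i, (i < n)%nat -> f i <= g i) -> sumR n f <= sumR n g.
Proof.
  induction n as [|n IH]; intros H; simpl; [lra|].
  assert (f n <= g n) by (apply H; lia).
  assert (sumR n f <= sumR n g) by (apply IH; intros; apply H; lia). lra.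
Qed.

Lemma sumR_nonneg n f : (forall i, (i < n)%nat -> 0 <= f i) -> 0 <= sumR n f.
Proof.
  intros H. replace 0 with (sumR n (fun _ => 0)).
  - apply sumR_le; auto.
  - induction n as [|n IH]; simpl; [reflexivity|]. rewrite IH; [lra|].
    intros; apply H; lia.
Qed.

Lemma sumR_scal n a f : sumR n (fun i => a * f i) = a * sumR n f.
Proof. induction n as [|n IH]; simpl; [ring|]. rewrite IH; ring. Qed.

Lemma sumR_const n a : sumR n (fun _ => a) = INR n * a.
Proof. induction n as [|n IH]; simpl sumR; [simpl; ring|]. rewrite IH, S_INR; ring. Qed.

Lemma Rabs_sumR_le n f : Rabs (sumR n f) <= sumR n (fun i => Rabs (f i)).
Proof.
  induction n as [|n IH]; simpl; [rewrite Rabs_R0; lra|].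
  eapply Rle_trans; [apply Rabs_triang|]. lra.
Qed.

Lemma sumR_term_le n f l :
  (forall i, (i < n)%nat -> 0 <= f i) -> (l < n)%nat -> f l <= sumR n f.
Proof.
  induction n as [|n IH]; intros H Hl; [lia|]. simpl.
  assert (0 <= f n) by (apply H; lia).
  destruct (Nat.eq_dec l n) as [->|].
  - assert (0 <= sumR n f) by (apply sumR_nonneg; intros; apply H; lia). lra.
  - assert (f l <= sumR n f) by (apply IH; [intros; apply H; lia | lia]). lra.
Qed.

(** * Euclidean geometry of [R^d] *)

Definition sqnorm (d : nat) (v : nat -> R) : R := sumR d (fun l => v l ^ 2).
Definition vnorm (d : nat) (v : nat -> R) : R := sqrt (sqnorm d v).

Lemma sqnorm_nonneg d v : 0 <= sqnorm d v.
Proof. apply sumR_nonneg; intros; apply pow2_ge_0. Qed.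

Lemma dot_comm d u v : dot d u v = dot d v u.
Proof. apply sumR_ext; intros; ring. Qed.

Lemma dot_diag d v : dot d v v = sqnorm d v.
Proof. apply sumR_ext; intros; ring. Qed.

Lemma dot_sub_r d th a b : dot d th (fun l => a l - b l) = dot d th a - dot d th b.
Proof. unfold dot. induction d as [|d IH]; [simpl; ring|]. rewrite !sumR_S, IH; ring. Qed.

Lemma sqnorm_sub_scal d v u t :
  sqnorm d (fun l => v l - t * u l) = sqnorm d v - 2 * t * dot d u v + t ^ 2 * dot d u u.
Proof.
  unfold sqnorm, dot. induction d as [|d IH]; [simpl; ring|]. rewrite !sumR_S, IH; ring.
Qed.

Lemma sqnorm_eq0_dot d a v : sqnorm d v = 0 -> dot d a v = 0.
Proof.
  intros H. unfold dot. rewrite (sumR_ext d _ (fun _ => 0)).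
  - rewrite sumR_const; ring.
  - intros l Hl. assert (v l ^ 2 <= sqnorm d v).
    { apply (sumR_term_le d (fun l => v l ^ 2)); auto. intros; apply pow2_ge_0. }
    assert (Hvl : v l = 0) by nra. rewrite Hvl; ring.
Qed.

(* Cauchy-Schwarz for a unit vector: the quadratic [t |-> |v - t th|^2] is
   nonnegative at [t = <th, v>]. *)
Lemma Rabs_dot_unit_le d th v : on_sphere d th -> Rabs (dot d th v) <= vnorm d v.
Proof.
  intros Hth. pose proof (sqnorm_nonneg d (fun l => v l - dot d th v * th l)) as H.
  unfold on_sphere in Hth. rewrite sqnorm_sub_scal, Hth in H.
  rewrite <- sqrt_Rsqr_abs. apply sqrt_le_1_alt. unfold Rsqr. lra.
Qed.

Lemma abs_dist_dot_le d th a b :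
  on_sphere d th -> abs_dist (dot d th a) (dot d th b) <= eucl_dist d a b.
Proof.
  intros Hth. unfold abs_dist. rewrite <- dot_sub_r. exact (Rabs_dot_unit_le d th _ Hth).
Qed.

Lemma on_sphere_basis0 d : (0 < d)%nat -> on_sphere d (fun i => if Nat.eqb i 0 then 1 else 0).
Proof.
  intros Hd. unfold on_sphere, dot. destruct d as [|d]; [lia|]. clear Hd.
  induction d as [|d IH]; [simpl; ring|]. rewrite sumR_S, IH. simpl. ring.
Qed.

Definition unit_vec (d : nat) (v : nat -> R) : nat -> R := fun l => v l / vnorm d v.

Lemma unit_vec_on_sphere d v : vnorm d v <> 0 -> on_sphere d (unit_vec d v).
Proof.
  intros Hv. unfold on_sphere, unit_vec. rewrite dot_diag. unfold sqnorm.
  rewrite (sumR_ext d _ (fun l => / vnorm d v ^ 2 * v l ^ 2)) by (intros; field; auto).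
  rewrite sumR_scal. fold (sqnorm d v). unfold vnorm in *.
  rewrite pow2_sqrt by apply sqnorm_nonneg.
  apply Rinv_l. intros H. apply Hv. rewrite H. apply sqrt_0.
Qed.

Lemma Rabs_unit_vec_le d v l : (l < d)%nat -> Rabs (unit_vec d v l) <= 1.
Proof.
  intros Hl. unfold unit_vec.
  assert (Hvl : v l ^ 2 <= vnorm d v ^ 2).
  { unfold vnorm. rewrite pow2_sqrt by apply sqnorm_nonneg.
    apply (sumR_term_le d (fun l => v l ^ 2)); auto. intros; apply pow2_ge_0. }
  assert (Hn : 0 <= vnorm d v) by apply sqrt_pos.
  destruct (Req_dec (vnorm d v) 0) as [H0|H0].
  - rewrite H0 in Hvl |- *. replace (v l) with 0 by nra.
    unfold Rdiv. rewrite Rmult_0_l, Rabs_R0. lra.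
  - unfold Rdiv. rewrite Rabs_mult, Rabs_inv, (Rabs_pos_eq (vnorm d v)) by lra.
    apply (Rmult_le_reg_r (vnorm d v)); [lra|]. field_simplify; [|lra].
    apply Rabs_le; split; nra.
Qed.

Lemma dot_unit_vec_l d v a : vnorm d v <> 0 -> dot d v a = vnorm d v * dot d (unit_vec d v) a.
Proof.
  intros Hv. unfold dot. rewrite <- sumR_scal. apply sumR_ext; intros.
  unfold unit_vec. field; auto.
Qed.

(** * Sign vectors *)

(* The coordinates beyond [n] are pinned to [1], so that there are only
   finitely many sign vectors of length [n]. *)
Definition sign_vector (n : nat) (e : nat -> R) : Prop :=
  forall i, ((i < n)%nat -> e i = 1 \/ e i = -1) /\ ((n <= i)%nat -> e i = 1).

Definition set_coord (e : nat -> R) (n : nat) (s : R) : nat -> R :=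
  fun i => if Nat.eqb i n then s else e i.

Lemma sign_vector_set_coord n e s :
  sign_vector n e -> (s = 1 \/ s = -1) -> sign_vector (S n) (set_coord e n s).
Proof.
  intros He Hs i. unfold set_coord. destruct (Nat.eqb_spec i n) as [->|].
  - split; intros; [auto | lia].
  - split; intros; apply (He i); lia.
Qed.

Lemma sign_vector_restrict n e : sign_vector (S n) e -> sign_vector n (set_coord e n 1).
Proof.
  intros He i. unfold set_coord. destruct (Nat.eqb_spec i n) as [->|].
  - split; intros; [lia | reflexivity].
  - split; intros; apply (He i); lia.
Qed.

Lemma set_coord_restore e n : set_coord (set_coord e n 1) n (e n) = e.
Proof.
  apply functional_extensionality; intros i. unfold set_coord.
  destruct (Nat.eqb_spec i n) as [->|]; reflexivity.
Qed.

Lemma sign_vector_flip n e k :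
  sign_vector n e -> (k < n)%nat -> sign_vector n (set_coord e k (- e k)).
Proof.
  intros He Hk i. unfold set_coord. destruct (Nat.eqb_spec i k) as [->|].
  - split; intros; [|lia]. destruct (proj1 (He k) Hk) as [-> | ->]; [right | left]; ring.
  - exact (He i).
Qed.

Lemma sign_vector_max n (F : (nat -> R) -> R) :
  exists e, sign_vector n e /\ forall e', sign_vector n e' -> F e' <= F e.
Proof.
  induction n as [|n IH] in F |- *.
  - exists (fun _ => 1). split; [intros i; split; intros; [lia | reflexivity]|].
    intros e' He'.
    replace e' with (fun _ : nat => 1) by (apply functional_extensionality; intros i;
      symmetry; apply (He' i); lia).
    lra.
  - destruct (IH (fun e => F (set_coord e n 1))) as [e1 [He1 Max1]].
    destruct (IH (fun e => F (set_coord e n (-1)))) as [e2 [He2 Max2]].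
    assert (Hcases : forall e', sign_vector (S n) e' ->
              F e' <= F (set_coord e1 n 1) \/ F e' <= F (set_coord e2 n (-1))).
    { intros e' He'. rewrite <- (set_coord_restore e' n).
      pose proof (sign_vector_restrict n e' He') as Hr.
      destruct (proj1 (He' n) (Nat.lt_succ_diag_r n)) as [-> | ->]; auto. }
    destruct (Rle_dec (F (set_coord e1 n 1)) (F (set_coord e2 n (-1)))).
    + exists (set_coord e2 n (-1)). split; [apply sign_vector_set_coord; auto|].
      intros e' He'. destruct (Hcases e' He'); lra.
    + exists (set_coord e1 n 1). split; [apply sign_vector_set_coord; auto|].
      intros e' He'. destruct (Hcases e' He'); lra.
Qed.

(** * A direction along which finitely many vectors stay long *)

Definition signed_sum (N : nat) (c : nat -> nat -> R) (e : nat -> R) : nat -> R :=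
  fun l => sumR N (fun m => e m * c m l).

Lemma signed_sum_flip N c e k l : (k < N)%nat ->
  signed_sum N c (set_coord e k (- e k)) l = signed_sum N c e l - 2 * e k * c k l.
Proof.
  unfold signed_sum. induction N as [|N IH]; intros Hk; [lia|].
  rewrite !sumR_S. unfold set_coord at 2. destruct (Nat.eqb_spec N k) as [->|].
  - rewrite (sumR_ext k _ (fun m => e m * c m l)); [ring|].
    intros m Hm. unfold set_coord. destruct (Nat.eqb_spec m k); [lia | reflexivity].
  - rewrite IH by lia. ring.
Qed.

Lemma sqnorm_signed_sum_le d N c e : sign_vector N e ->
  (forall m l, (m < N)%nat -> (l < d)%nat -> Rabs (c m l) <= 1) ->
  sqnorm d (signed_sum N c e) <= INR d * INR N ^ 2.
Proof.
  intros He Hc. unfold sqnorm. rewrite <- sumR_const. apply sumR_le. intros l Hl.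
  assert (Hcoord : Rabs (signed_sum N c e l) <= INR N).
  { eapply Rle_trans; [apply Rabs_sumR_le|].
    rewrite <- (Rmult_1_r (INR N)), <- sumR_const. apply sumR_le. intros m Hm.
    rewrite Rabs_mult.
    replace (Rabs (e m)) with 1 by (destruct (proj1 (He m) Hm) as [-> | ->];
      unfold Rabs; destruct (Rcase_abs _); lra).
    rewrite Rmult_1_l. auto. }
  pose proof (pos_INR N). pose proof (Rabs_pos (signed_sum N c e l)).
  rewrite <- pow2_abs. nra.
Qed.

(* Flipping the sign [e k] of a maximizer cannot increase [|X|^2]. *)
Lemma max_signed_sum_aligned d N c e k : sign_vector N e -> (k < N)%nat ->
  (forall e', sign_vector N e' -> sqnorm d (signed_sum N c e') <= sqnorm d (signed_sum N c e)) ->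
  dot d (c k) (c k) <= e k * dot d (c k) (signed_sum N c e).
Proof.
  intros He Hk Hmax. pose proof (Hmax _ (sign_vector_flip N e k He Hk)) as H.
  unfold sqnorm in H.
  rewrite (sumR_ext d _ (fun l => (signed_sum N c e l - 2 * e k * c k l) ^ 2)) in H
    by (intros; rewrite signed_sum_flip; auto).
  fold (sqnorm d (fun l => signed_sum N c e l - 2 * e k * c k l)) in H.
  fold (sqnorm d (signed_sum N c e)) in H. rewrite sqnorm_sub_scal in H.
  destruct (proj1 (He k) Hk) as [Hek|Hek]; rewrite Hek in H |- *; lra.
Qed.

Lemma exists_dominating_vector d N (u : nat -> nat -> R) : exists X,
  sqnorm d X <= INR d * INR N ^ 2 /\
  forall m, (m < N)%nat -> vnorm d (u m) <= Rabs (dot d (u m) X).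
Proof.
  set (c := fun m => unit_vec d (u m)).
  destruct (sign_vector_max N (fun e => sqnorm d (signed_sum N c e))) as [e [He Hmax]].
  exists (signed_sum N c e). split.
  - apply sqnorm_signed_sum_le; auto. intros m l _ Hl. apply Rabs_unit_vec_le; auto.
  - intros m Hm. destruct (Req_dec (vnorm d (u m)) 0) as [H0|H0].
    { rewrite H0. apply Rabs_pos. }
    pose proof (max_signed_sum_aligned d N c e m He Hm Hmax) as Hal.
    unfold c in Hal at 1 2. rewrite (unit_vec_on_sphere d (u m) H0) in Hal.
    assert (Hdot : 1 <= Rabs (dot d (c m) (signed_sum N c e))).
    { destruct (proj1 (He m) Hm) as [Hem|Hem]; rewrite Hem in Hal;
        unfold Rabs; destruct (Rcase_abs _); lra. }
    rewrite (dot_unit_vec_l d (u m)), Rabs_mult, (Rabs_pos_eq (vnorm d (u m))) by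
      (auto || apply sqrt_pos).
    pose proof (sqrt_pos (sqnorm d (u m))). fold (vnorm d (u m)) in *.
    change (c m) with (unit_vec d (u m)) in Hdot. nra.
Qed.

Lemma exists_direction_dominating d N (u : nat -> nat -> R) : (0 < d)%nat ->
  exists th, on_sphere d th /\
    forall m, (m < N)%nat -> vnorm d (u m) <= INR N * sqrt (INR d) * Rabs (dot d th (u m)).
Proof.
  intros Hd. destruct (exists_dominating_vector d N u) as [X [HX Hdom]].
  assert (Hscale : 0 <= INR N * sqrt (INR d))
    by (apply Rmult_le_pos; [apply pos_INR | apply sqrt_pos]).
  destruct (Req_dec (vnorm d X) 0) as [H0|H0].
  - (* then [X = 0], so every [u m] vanishes and any direction works *)
    exists (fun i => if Nat.eqb i 0 then 1 else 0). split; [apply on_sphere_basis0; auto|].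
    intros m Hm. specialize (Hdom m Hm).
    rewrite (sqnorm_eq0_dot d (u m) X), Rabs_R0 in Hdom
      by (apply sqrt_eq_0; [apply sqnorm_nonneg | exact H0]).
    pose proof (Rabs_pos (dot d (fun i => if Nat.eqb i 0 then 1 else 0) (u m))). nra.
  - exists (unit_vec d X). split; [apply unit_vec_on_sphere; auto|].
    intros m Hm. specialize (Hdom m Hm).
    rewrite dot_comm, (dot_unit_vec_l d X), Rabs_mult, (Rabs_pos_eq (vnorm d X)) in Hdom
      by (auto || apply sqrt_pos).
    assert (Hr : vnorm d X <= INR N * sqrt (INR d)).
    { replace (INR N * sqrt (INR d)) with (sqrt (INR d * INR N ^ 2))
        by (rewrite sqrt_mult_alt, sqrt_pow2 by apply pos_INR; ring).
      apply sqrt_le_1_alt. exact HX. }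
    pose proof (Rabs_pos (dot d (unit_vec d X) (u m))). nra.
Qed.

(** * Suprema, infima and the Wasserstein distance *)

Lemma Rsup_is_lub E : bound E -> (exists x, E x) -> is_lub E (Rsup E).
Proof.
  intros Hb He. unfold Rsup. apply epsilon_spec.
  destruct (completeness E Hb He) as [m Hm]. exists m; exact Hm.
Qed.

Lemma Rinf_is_glb E : (exists x, E x) -> (exists b, forall c, E c -> b <= c) ->
  (forall c, E c -> Rinf E <= c) /\ (forall b, (forall c, E c -> b <= c) -> b <= Rinf E).
Proof.
  intros [x Hx] [b Hb].
  assert (Hlub : is_lub (fun z => E (- z)) (Rsup (fun z => E (- z)))).
  { apply Rsup_is_lub.
    - exists (- b). intros z Hz. apply Hb in Hz. lra.
    - exists (- x). rewrite Ropp_involutive. exact Hx. }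
  destruct Hlub as [Hub Hleast]. unfold Rinf. split.
  - intros c Hc. assert (- c <= Rsup (fun z => E (- z))); [|lra].
    apply Hub. rewrite Ropp_involutive. exact Hc.
  - intros b' Hb'. assert (Rsup (fun z => E (- z)) <= - b'); [|lra].
    apply Hleast. intros z Hz. apply Hb' in Hz. lra.
Qed.

Definition coupling_cost {T : Type} (dist : T -> T -> R) (k : nat)
    (x y : nat -> T) (pi : nat -> nat -> R) : R :=
  sumR k (fun i => sumR k (fun j => pi i j * dist (x i) (y j))).

Lemma product_coupling k w w' :
  is_prob k w -> is_prob k w' -> is_coupling k w w' (fun i j => w i * w' j).
Proof.
  intros [Hw Hw1] [Hw' Hw'1]. split; [|split].
  - intros i j Hi Hj. apply Rmult_le_pos; auto.
  - intros i Hi. rewrite sumR_scal, Hw'1. ring.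
  - intros j Hj. rewrite (sumR_ext k _ (fun i => w' j * w i)) by (intros; ring).
    rewrite sumR_scal, Hw1. ring.
Qed.

Lemma coupling_cost_nonneg {T : Type} (dist : T -> T -> R) k w w' x y pi :
  (forall a b, 0 <= dist a b) -> is_coupling k w w' pi -> 0 <= coupling_cost dist k x y pi.
Proof.
  intros Hdist [Hpi _]. apply sumR_nonneg; intros i Hi. apply sumR_nonneg; intros j Hj.
  apply Rmult_le_pos; auto.
Qed.

Lemma W1_glb {T : Type} (dist : T -> T -> R) k w w' (x y : nat -> T) :
  is_prob k w -> is_prob k w' -> (forall a b, 0 <= dist a b) ->
  (forall pi, is_coupling k w w' pi -> W1 dist k w x w' y <= coupling_cost dist k x y pi) /\
  (forall b, (forall pi, is_coupling k w w' pi -> b <= coupling_cost dist k x y pi) ->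
     b <= W1 dist k w x w' y).
Proof.
  intros Hw Hw' Hdist.
  destruct (Rinf_is_glb (fun c => exists pi, is_coupling k w w' pi /\
                           c = coupling_cost dist k x y pi)) as [Hlb Hglb].
  - exists (coupling_cost dist k x y (fun i j => w i * w' j)).
    exists (fun i j => w i * w' j). split; [apply product_coupling|]; auto.
  - exists 0. intros c [pi [Hpi ->]]. eapply coupling_cost_nonneg; eauto.
  - split.
    + intros pi Hpi. apply Hlb. exists pi; auto.
    + intros b Hb. apply Hglb. intros c [pi [Hpi ->]]. auto.
Qed.

Lemma coupling_cost_le_scale {T1 T2 : Type} (dist1 : T1 -> T1 -> R) (dist2 : T2 -> T2 -> R)
    k w w' x1 y1 x2 y2 c pi :
  is_coupling k w w' pi ->
  (forall i j, (i < k)%nat -> (j < k)%nat -> dist1 (x1 i) (y1 j) <= c * dist2 (x2 i) (y2 j)) ->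
  coupling_cost dist1 k x1 y1 pi <= c * coupling_cost dist2 k x2 y2 pi.
Proof.
  intros [Hpos _] Hle. unfold coupling_cost. rewrite <- sumR_scal. apply sumR_le; intros i Hi.
  rewrite <- sumR_scal. apply sumR_le; intros j Hj.
  specialize (Hpos i j Hi Hj). specialize (Hle i j Hi Hj). nra.
Qed.

Lemma W1_le_scale {T1 T2 : Type} (dist1 : T1 -> T1 -> R) (dist2 : T2 -> T2 -> R)
    k w w' x1 y1 x2 y2 c :
  is_prob k w -> is_prob k w' -> 0 < c ->
  (forall a b, 0 <= dist1 a b) -> (forall a b, 0 <= dist2 a b) ->
  (forall i j, (i < k)%nat -> (j < k)%nat -> dist1 (x1 i) (y1 j) <= c * dist2 (x2 i) (y2 j)) ->
  W1 dist1 k w x1 w' y1 <= c * W1 dist2 k w x2 w' y2.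
Proof.
  intros Hw Hw' Hc Hd1 Hd2 Hle.
  destruct (W1_glb dist1 k w w' x1 y1 Hw Hw' Hd1) as [Hcost1 _].
  destruct (W1_glb dist2 k w w' x2 y2 Hw Hw' Hd2) as [_ Hglb2].
  set (W := W1 dist1 k w x1 w' y1) in *.
  assert (Hdiv : W / c <= W1 dist2 k w x2 w' y2).
  { apply Hglb2. intros pi Hpi. apply (Rmult_le_reg_l c); [lra|].
    replace (c * (W / c)) with W by (field; lra).
    eapply Rle_trans; [apply Hcost1, Hpi | eapply coupling_cost_le_scale; eauto]. }
  replace W with (c * (W / c)) by (field; lra). apply Rmult_le_compat_l; lra.
Qed.

(** * The sliced Wasserstein distance *)

Lemma is_prob_pos k w : is_prob k w -> (0 < k)%nat.
Proof. intros [_ H]. destruct k; [simpl in H; lra | lia]. Qed.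

Lemma W1_proj_le d k w w' x y th : is_prob k w -> is_prob k w' -> on_sphere d th ->
  W1 abs_dist k w (proj d th x) w' (proj d th y) <= W1 (eucl_dist d) k w x w' y.
Proof.
  intros Hw Hw' Hth. rewrite <- (Rmult_1_l (W1 (eucl_dist d) k w x w' y)).
  apply W1_le_scale; auto; [lra | intros; apply Rabs_pos | intros; apply sqrt_pos |].
  intros i j _ _. rewrite Rmult_1_l. apply abs_dist_dot_le; auto.
Qed.

Lemma sliced_sup_is_lub d k w w' x y : (0 < d)%nat -> is_prob k w -> is_prob k w' ->
  is_lub (fun s => exists th, on_sphere d th /\
            s = W1 abs_dist k w (proj d th x) w' (proj d th y))
         (sliced_sup d k w x w' y).
Proof.
  intros Hd Hw Hw'. apply Rsup_is_lub.
  - exists (W1 (eucl_dist d) k w x w' y). intros s [th [Hth ->]]. apply W1_proj_le; auto.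
  - eexists. exists (fun i => if Nat.eqb i 0 then 1 else 0).
    split; [apply on_sphere_basis0; auto | reflexivity].
Qed.

(* The k^2 differences [x i - y j] are indexed by [m = i * k + j]. *)
Lemma exists_direction_pairs d k (x y : nat -> nat -> R) : (0 < d)%nat ->
  exists th, on_sphere d th /\ forall i j, (i < k)%nat -> (j < k)%nat ->
    eucl_dist d (x i) (y j) <= INR k ^ 2 * sqrt (INR d) * abs_dist (proj d th x i) (proj d th y j).
Proof.
  intros Hd.
  destruct (exists_direction_dominating d (k * k)
              (fun m l => x (m / k)%nat l - y (m mod k)%nat l) Hd) as [th [Hth Hdom]].
  exists th. split; auto. intros i j Hi Hj.
  specialize (Hdom (i * k + j)%nat ltac:(nia)).
  assert (Hdiv : ((i * k + j) / k = i)%nat)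
    by (symmetry; apply Nat.div_unique with (r := j); nia).
  assert (Hmod : ((i * k + j) mod k = j)%nat)
    by (symmetry; apply Nat.mod_unique with (q := i); nia).
  rewrite Hdiv, Hmod, mult_INR in Hdom.
  unfold abs_dist, proj. rewrite <- dot_sub_r.
  replace (INR k ^ 2) with (INR k * INR k) by ring. exact Hdom.
Qed.

Theorem mainTheorem3 (d k : nat) (Hd : (0 < d)%nat)
    (w w' : nat -> R) (x y : nat -> nat -> R)
    (Hw : is_prob k w) (Hw' : is_prob k w') :
  sliced_sup d k w x w' y <= W1 (eucl_dist d) k w x w' y /\
  W1 (eucl_dist d) k w x w' y <=
    INR k ^ 2 * sqrt (INR d) * sliced_sup d k w x w' y.
Proof.
  pose proof (is_prob_pos k w Hw) as Hk.
  destruct (sliced_sup_is_lub d k w w' x y Hd Hw Hw') as [Hub Hleast].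
  split.
  - apply Hleast. intros s [th [Hth ->]]. apply W1_proj_le; auto.
  - destruct (exists_direction_pairs d k x y Hd) as [th [Hth Hpair]].
    assert (Hc : 0 < INR k ^ 2 * sqrt (INR d)).
    { apply Rmult_lt_0_compat; [apply pow_lt, lt_0_INR | apply sqrt_lt_R0, lt_0_INR]; auto. }
    eapply Rle_trans.
    + apply (W1_le_scale (eucl_dist d) abs_dist k w w' x y (proj d th x) (proj d th y));
        [exact Hw | exact Hw' | exact Hc | intros; apply sqrt_pos | intros; apply Rabs_pos
        | exact Hpair].
    + apply Rmult_le_compat_l; [lra|]. apply Hub. exists th; auto.
Qed.
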